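(* Assume $\delta_s\ge\delta_M$, let $\theta>0$ satisfy $\mathcal R(\theta)<1$, and let $\alpha>0$, $\beta_s>0$. Then $\mathbf 0\in\mathcal D'$ is globally asymptotically stable in $\mathcal D'=[0,+\infty)^4$ (in the Filippov sense) for the closed-loop system $$\dot E=\beta_E F\Big(1-\frac EK\Big)-(\nu_E+\delta_E)E,\quad \dot M=(1-\nu)\nu_E E-\delta_M M,\quad \dot F=\nu\nu_E E\frac{M}{M+\gamma_sM_s}-\delta_F F,\quad \dot M_s=u(E,M,F,M_s)-\delta_sM_s,$$ where $u=\max(0,G)$ is the feedback defined below.
   Context: Parameters: $\beta_E,\nu_E,\delta_E,\delta_M,\delta_F,\delta_s,K>0$, $\nu\in(0,1)$, $\gamma_s\in(0,1]$. $\mathcal R_0:=\dfrac{\beta_E\nu\nu_E}{\delta_F(\nu_E+\delta_E)}$, $\mathcal R(\theta):=\dfrac{\mathcal R_0}{1+\gamma_s\theta}$, $\psi:=\dfrac{2\beta_E\nu\nu_E}{\delta_F(1-\mathcal R(\theta))(1+\gamma_s\theta)}$. Define $G:\mathcal D'\to\mathbb R$ by $G=0$ if $M+M_s=0$ and otherwise $$G=\frac{\gamma_s\psi E(\theta M+M_s)^2}{\alpha(M+\gamma_sM_s)(3\theta M+M_s)}+\frac{\big((1-\nu)\nu_E\theta E-\theta\delta_MM\big)(\theta M+3M_s)}{3\theta M+M_s}+\delta_sM_s+\frac{\beta_s}{\alpha}(\theta M-M_s),$$ and $u:=\max(0,G)$ (so $u\ge0$, $u\in L^\infty_{loc}(\mathcal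 D')$). With $X(z)$ the closed-loop right-hand side (its value on the null set $\{M=M_s=0\}$ being irrelevant), Filippov solutions are locally Lipschitz curves $z:I\to\mathcal D'$ such that for a.e. $t$, $\dot z(t)\in\bigcap_{\varepsilon>0}\bigcap_{N}\overline{\mathrm{conv}}\,X\big(((z(t)+\varepsilon B)\cap\mathcal D')\setminus N\big)$, with $B$ the unit ball of $\mathbb R^4$ and $N$ ranging over Lebesgue-null sets. $\mathbf 0$ is globally asymptotically stable in $\mathcal S\subset\mathcal D'$ if (stability) for every $\varepsilon>0$ there is $\delta>0$ such that every Filippov solution with $z(0)\in\mathcal S$, $\|z(0)\|<\delta$ satisfies $\|z(t)\|<\varepsilon$ for all $t>0$, and (attractivity) every Filippov solution with $z(0)\in\mathcal S$ tends to $\mathbf 0$. *)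

From Stdlib Require Import Reals.
Open Scope R_scope.

Record Params := mkParams {
  betaE : R; nuE : R; deltaE : R; deltaM : R; deltaF : R; deltas : R; K : R;
  nu : R; gammas : R }.

Definition params_ok (p : Params) : Prop :=
  0 < betaE p /\ 0 < nuE p /\ 0 < deltaE p /\ 0 < deltaM p /\ 0 < deltaF p /\
  0 < deltas p /\ 0 < K p /\ 0 < nu p < 1 /\ 0 < gammas p <= 1.

Record V4 := mkV { vE : R; vM : R; vF : R; vMs : R }.

Definition vadd (x y : V4) : V4 :=
  mkV (vE x + vE y) (vM x + vM y) (vF x + vF y) (vMs x + vMs y).
Definition vscale (a : R) (x : V4) : V4 :=
  mkV (a * vE x) (a * vM x) (a * vF x) (a * vMs x).
Definition vsub (x y : V4) : V4 := vadd x (vscale (-1) y).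
Definition vzero : V4 := mkV 0 0 0 0.

Definition vnorm (x : V4) : R :=
  sqrt (vE x ^ 2 + vM x ^ 2 + vF x ^ 2 + vMs x ^ 2).

Definition Dp (x : V4) : Prop :=
  0 <= vE x /\ 0 <= vM x /\ 0 <= vF x /\ 0 <= vMs x.

Definition R0 (p : Params) : R :=
  betaE p * nu p * nuE p / (deltaF p * (nuE p + deltaE p)).
Definition Rth (p : Params) (theta : R) : R := R0 p / (1 + gammas p * theta).
Definition psi (p : Params) (theta : R) : R :=
  2 * betaE p * nu p * nuE p /
  (deltaF p * (1 - Rth p theta) * (1 + gammas p * theta)).

Definition G (p : Params) (theta alpha betas : R) (x : V4) : R :=
  let E := vE x in let M := vM x in let Ms := vMs x in
  if Req_EM_T (M + Ms) 0 then 0 else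
    gammas p * psi p theta * E * (theta * M + Ms) ^ 2
      / (alpha * (M + gammas p * Ms) * (3 * theta * M + Ms))
    + ((1 - nu p) * nuE p * theta * E - theta * deltaM p * M) * (theta * M + 3 * Ms)
      / (3 * theta * M + Ms)
    + deltas p * Ms
    + betas / alpha * (theta * M - Ms).

Definition u (p : Params) (theta alpha betas : R) (x : V4) : R :=
  Rmax 0 (G p theta alpha betas x).

(* Closed-loop right-hand side; the value of the ratio M/(M+gammas Ms) on the
   (Lebesgue-null) set {M = Ms = 0} is irrelevant and fixed to 0. *)
Definition Xcl (p : Params) (theta alpha betas : R) (x : V4) : V4 :=
  let E := vE x in let M := vM x in let F := vF x in let Ms := vMs x in
  mkV (betaE p * F * (1 - E / K p) - (nuE p + deltaE p) * E)
      ((1 - nu p) * nuE p * E - deltaM p * M)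
      (nu p * nuE p * E * (if Req_EM_T (M + Ms) 0 then 0 else M / (M + gammas p * Ms))
        - deltaF p * F)
      (u p theta alpha betas x - deltas p * Ms).

Definition null1 (N : R -> Prop) : Prop :=
  forall eps, 0 < eps ->
  exists a b : nat -> R,
    (forall n, a n <= b n) /\
    (forall t, N t -> exists n, a n <= t <= b n) /\
    (forall n, sum_f_R0 (fun k => b k - a k) n < eps).

Definition in_box (lo hi x : V4) : Prop :=
  vE lo <= vE x <= vE hi /\ vM lo <= vM x <= vM hi /\
  vF lo <= vF x <= vF hi /\ vMs lo <= vMs x <= vMs hi.
Definition box_vol (lo hi : V4) : R :=
  (vE hi - vE lo) * (vM hi - vM lo) * (vF hi - vF lo) * (vMs hi - vMs lo).

Definition null4 (N : V4 -> Prop) : Prop :=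
  forall eps, 0 < eps ->
  exists lo hi : nat -> V4,
    (forall n, vE (lo n) <= vE (hi n) /\ vM (lo n) <= vM (hi n) /\
               vF (lo n) <= vF (hi n) /\ vMs (lo n) <= vMs (hi n)) /\
    (forall x, N x -> exists n, in_box (lo n) (hi n) x) /\
    (forall n, sum_f_R0 (fun k => box_vol (lo k) (hi k)) n < eps).

Definition convex (C : V4 -> Prop) : Prop :=
  forall x y l, C x -> C y -> 0 <= l <= 1 ->
    C (vadd (vscale l x) (vscale (1 - l) y)).
Definition closed4 (C : V4 -> Prop) : Prop :=
  forall x, (forall e, 0 < e -> exists y, C y /\ vnorm (vsub y x) < e) -> C x.
Definition clconv (S : V4 -> Prop) (v : V4) : Prop :=
  forall C, convex C -> closed4 C -> (forall y, S y -> C y) -> C v.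

Definition filippov_set (X : V4 -> V4) (x : V4) (v : V4) : Prop :=
  forall eps N, 0 < eps -> null4 N ->
    clconv (fun w => exists y, Dp y /\ vnorm (vsub y x) <= eps /\ ~ N y /\ w = X y) v.

Definition has_deriv (z : R -> V4) (t : R) (d : V4) : Prop :=
  derivable_pt_lim (fun s => vE (z s)) t (vE d) /\
  derivable_pt_lim (fun s => vM (z s)) t (vM d) /\
  derivable_pt_lim (fun s => vF (z s)) t (vF d) /\
  derivable_pt_lim (fun s => vMs (z s)) t (vMs d).

Definition filippov_solution (X : V4 -> V4) (z : R -> V4) : Prop :=
  (forall t, 0 <= t -> Dp (z t)) /\
  (forall T, 0 < T -> exists L, forall s t, 0 <= s <= T -> 0 <= t <= T ->
      vnorm (vsub (z s) (z t)) <= L * Rabs (s - t)) /\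
  null1 (fun t => 0 <= t /\
      ~ (exists d, has_deriv z t d /\ filippov_set X (z t) d)).

Definition GAS_filippov (X : V4 -> V4) (S : V4 -> Prop) : Prop :=
  (forall eps, 0 < eps -> exists delta, 0 < delta /\
     forall z, filippov_solution X z -> S (z 0) -> vnorm (z 0) < delta ->
       forall t, 0 < t -> vnorm (z t) < eps) /\
  (forall z, filippov_solution X z -> S (z 0) ->
     forall eps, 0 < eps -> exists T, forall t, T <= t -> vnorm (z t) < eps).

(* Away from [M = Ms = 0] the Lyapunov function
     V = E + wF F + wM M + wPhi (Ms - theta M)^2 / (Ms + theta M)
   satisfies [dV . X <= - decay * V] on D' = [0,+oo)^4 (lemma [V_dissipation]):
   the weights make the linear part dissipative, and the feedback [G] is
   designed so that the derivative of the ratio penalty cancels the coupling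
   term of the F-equation ([feedback_identity]); where the control is switched
   off, the natural male mortality and [deltaM <= deltas] suffice.  Filippov
   velocities inherit this inequality because a linear functional of the
   field that is continuous at a point bounds every Filippov velocity there
   ([filippov_lin_cont]).  On [M = Ms = 0] the positivity constraints force
   the solution to sit at the origin with zero velocity ([degenerate_point]).
   Hence [(1 + decay t) V(z t)] is Lipschitz with a.e. nonpositive
   derivative, so nonincreasing ([lipschitz_nonincreasing], proved by real
   induction over a cover of the exceptional null set); since [V] is
   equivalent to the norm on D', stability and attractivity follow. *)

From Pilot Require Import Defs.
From Stdlib Require Import Reals Lra Classical.
Open Scope R_scope.


Lemma real_induction (P : R -> Prop) a b :
  a <= b -> P a ->
  (forall m, a < m <= b -> (forall r, a <= r < m -> P r) -> P m) ->
  (forall m, a <= m < b -> (forall r, a <= r <= m -> P r) ->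
     exists d, 0 < d /\ forall s, m < s <= m + d -> s <= b -> P s) ->
  P b.
Proof.
  intros Hab Pa Hleft Hright.
  set (Good := fun s => a <= s <= b /\ forall r, a <= r <= s -> P r).
  assert (Good_a : Good a).
  { split; [lra|]. intros r Hr. replace r with a by lra. exact Pa. }
  assert (Hbnd : bound Good) by (exists b; intros x [Hx _]; lra).
  destruct (completeness Good Hbnd (ex_intro _ a Good_a)) as [m [Hub Hleast]].
  assert (Ham : a <= m) by (apply Hub; exact Good_a).
  assert (Hmb : m <= b) by (apply Hleast; intros x [Hx _]; lra).
  assert (below_m : forall r, a <= r < m -> P r).
  { intros r Hr. apply NNPP. intro HnP.
    assert (Hr_ub : is_upper_bound Good r).
    { intros x [Hx HPx]. apply Rnot_lt_le. intro Hxr. apply HnP, HPx. lra. }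
    specialize (Hleast r Hr_ub). lra. }
  assert (upto_m : forall r, a <= r <= m -> P r).
  { intros r Hr. destruct (Req_dec r m) as [->|Hne]; [|apply below_m; lra].
    destruct (Req_dec m a) as [->|Hma]; [exact Pa|]. apply Hleft; [lra|exact below_m]. }
  destruct (Req_dec m b) as [<-|Hmb']; [apply upto_m; lra|].
  destruct (Hright m ltac:(lra) upto_m) as [d [Hd Hstep]].
  set (m' := Rmin b (m + d)).
  assert (Good m').
  { split; [split; [unfold m'; apply Rmin_glb; lra|apply Rmin_l]|].
    intros r Hr. destruct (Rle_dec r m); [apply upto_m; lra|].
    apply Hstep; unfold m' in Hr; generalize (Rmin_l b (m + d)) (Rmin_r b (m + d)); lra. }
  assert (m < m') by (unfold m'; apply Rmin_glb_lt; lra).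
  specialize (Hub m' H). lra.
Qed.

Lemma geom_sum_half n : sum_f_R0 (fun k => (/2) ^ (S k)) n = 1 - (/2) ^ (S n).
Proof. induction n as [|n IH]; [simpl; field|]. rewrite tech5, IH. simpl. field. Qed.

(* The intervals [[lo k, hi k]]
   covering [N] are enlarged by [eps/2^(k+1)] so that every point of [N] is
   interior to one of them; on the enlarged intervals the growth of [W] is
   paid by the Lipschitz constant times their length, elsewhere by the sign
   of the derivative. *)
Section CoverArgument.
Variables (W : R -> R) (a b L eps : R) (N : R -> Prop) (lo hi : nat -> R).
Hypothesis Hab : a <= b.
Hypothesis HL : 0 <= L.
Hypothesis Heps : 0 < eps.
Hypothesis Hlip : forall s t, a <= s <= b -> a <= t <= b ->
  Rabs (W s - W t) <= L * Rabs (s - t).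
Hypothesis Hlohi : forall k, lo k <= hi k.
Hypothesis Hcov : forall t, N t -> exists k, lo k <= t <= hi k.
Hypothesis Hsum : forall n, sum_f_R0 (fun k => hi k - lo k) n < eps.
Hypothesis Hgood : forall t, a <= t <= b -> ~ N t ->
  exists D, derivable_pt_lim W t D /\ D <= 0.

Let lo' k := lo k - eps * (/2) ^ (S k).
Let hi' k := hi k + eps * (/2) ^ (S k).

Lemma enlarge_pos k : 0 < eps * (/2) ^ (S k).
Proof. apply Rmult_lt_0_compat; [exact Heps|apply pow_lt; lra]. Qed.

Definition cover_len k s := Rmax 0 (Rmin (hi' k) s - Rmax (lo' k) a).

Definition covered n s := sum_f_R0 (fun k => cover_len k s) n.

Lemma cover_len_nonneg k s : 0 <= cover_len k s.
Proof. apply Rmax_l. Qed.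

Lemma cover_len_mono k s t : t <= s -> cover_len k t <= cover_len k s.
Proof.
  intro Hts. unfold cover_len. apply Rle_max_compat_l.
  assert (Rmin (hi' k) t <= Rmin (hi' k) s).
  { unfold Rmin. destruct (Rle_dec (hi' k) t), (Rle_dec (hi' k) s); lra. }
  lra.
Qed.

Lemma cover_len_le k s : cover_len k s <= hi k - lo k + 2 * eps * (/2) ^ (S k).
Proof.
  unfold cover_len. apply Rmax_lub.
  - generalize (Hlohi k) (enlarge_pos k). nra.
  - generalize (Rmin_l (hi' k) s) (Rmax_l (lo' k) a). unfold hi', lo'. lra.
Qed.

Lemma cover_len_inside k s t :
  a <= t -> lo' k < t -> t <= s -> s <= hi' k -> cover_len k s - cover_len k t = s - t.
Proof.
  intros. unfold cover_len. rewrite !Rmin_right by lra.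
  assert (Rmax (lo' k) a <= t) by (apply Rmax_lub; lra).
  set (r := Rmax (lo' k) a) in *. rewrite !Rmax_right by lra. lra.
Qed.

Lemma covered_at_a n : covered n a = 0.
Proof.
  assert (Hk : forall k, cover_len k a = 0).
  { intro k. unfold cover_len. apply Rmax_left.
    generalize (Rmin_r (hi' k) a) (Rmax_r (lo' k) a). lra. }
  unfold covered. induction n as [|n IH]; simpl; rewrite Hk; [lra|rewrite IH; lra].
Qed.

Lemma covered_mono n s t : t <= s -> covered n t <= covered n s.
Proof.
  intro Hts. unfold covered.
  induction n as [|n IH]; simpl;
    [generalize (cover_len_mono 0 s t Hts)|generalize (cover_len_mono (S n) s t Hts)]; lra.
Qed.

Lemma covered_mono_n n n' s : a <= s -> (n <= n')%nat -> covered n s <= covered n' s.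
Proof.
  intros Has Hnn'. induction Hnn' as [|n' _ IH]; [lra|].
  unfold covered in *. simpl. generalize (cover_len_nonneg (S n') s). lra.
Qed.

Lemma covered_inside n k s t : (k <= n)%nat -> a <= t -> lo' k < t -> t <= s -> s <= hi' k ->
  s - t <= covered n s - covered n t.
Proof.
  intros Hk Hat Hlo Hts Hhi. unfold covered.
  induction n as [|n IH]; simpl.
  - inversion Hk; subst. generalize (cover_len_inside 0 s t Hat Hlo Hts Hhi). lra.
  - inversion Hk as [Heq|k' Hk' Heq]; subst.
    + generalize (cover_len_inside (S n) s t Hat Hlo Hts Hhi) (covered_mono n s t Hts).
      unfold covered. lra.
    + specialize (IH Hk'). generalize (cover_len_mono (S n) s t Hts). lra.
Qed.

Lemma covered_bound n s : covered n s <= 3 * eps.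
Proof.
  assert (Hlen : covered n s <=
    sum_f_R0 (fun k => hi k - lo k) n + 2 * eps * sum_f_R0 (fun k => (/2) ^ (S k)) n).
  { unfold covered. induction n as [|n IH].
    - simpl. generalize (cover_len_le 0 s). lra.
    - rewrite !tech5, Rmult_plus_distr_l. generalize (cover_len_le (S n) s). lra. }
  rewrite geom_sum_half in Hlen.
  assert (0 <= 2 * eps * (/2) ^ (S n)) by (generalize (enlarge_pos n); simpl; lra).
  generalize (Hsum n). lra.
Qed.

Let P s := forall eta, 0 < eta ->
  exists n, W s <= W a + eps * (s - a) + L * covered n s + eta.

Lemma invariant_left m : a < m <= b -> (forall r, a <= r < m -> P r) -> P m.
Proof.
  intros Hm Hbelow eta Heta.
  set (r := Rmax a (m - eta / (2 * (L + 1)))).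
  assert (Hr : a <= r < m).
  { split; [apply Rmax_l|]. apply Rmax_lub_lt; [lra|].
    assert (0 < eta / (2 * (L + 1))) by (apply Rdiv_lt_0_compat; lra). lra. }
  assert (Hmr : L * (m - r) <= eta / 2).
  { assert (m - r <= eta / (2 * (L + 1)))
      by (generalize (Rmax_r a (m - eta / (2 * (L + 1)))); unfold r; lra).
    apply Rle_trans with ((L + 1) * (eta / (2 * (L + 1)))); [nra|].
    right. field. lra. }
  destruct (Hbelow r Hr (eta / 2) ltac:(lra)) as [n Hn]. exists n.
  assert (Hjump : W m - W r <= L * (m - r)).
  { generalize (Hlip m r ltac:(lra) ltac:(lra)) (Rle_abs (W m - W r)).
    rewrite (Rabs_right (m - r)) by lra. lra. }
  assert (L * covered n r <= L * covered n m)
    by (apply Rmult_le_compat_l; [lra|apply covered_mono; lra]).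
  assert (eps * (r - a) <= eps * (m - a)) by (apply Rmult_le_compat_l; lra).
  lra.
Qed.

Lemma invariant_right m : a <= m < b -> P m ->
  exists d, 0 < d /\ forall s, m < s <= m + d -> s <= b -> P s.
Proof.
  intros Hm Pm. destruct (classic (N m)) as [HN|HN].
  - (* [m] is interior to an enlarged interval: pay with the covered length *)
    destruct (Hcov m HN) as [k Hk].
    assert (Hlo : lo' k < m) by (unfold lo'; generalize (enlarge_pos k); lra).
    assert (Hhi : m < hi' k) by (unfold hi'; generalize (enlarge_pos k); lra).
    exists (hi' k - m). split; [lra|]. intros s Hs Hsb eta Heta.
    destruct (Pm eta Heta) as [n Hn]. exists (max n k).
    assert (Hgrow := covered_inside (max n k) k s m (Nat.le_max_r n k) ltac:(lra) Hlo ltac:(lra) ltac:(lra)).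
    assert (covered n m <= covered (max n k) m) by (apply covered_mono_n; [lra|apply Nat.le_max_l]).
    assert (Hjump : W s - W m <= L * (s - m)).
    { generalize (Hlip s m ltac:(lra) ltac:(lra)) (Rle_abs (W s - W m)).
      rewrite (Rabs_right (s - m)) by lra. lra. }
    assert (eps * (m - a) <= eps * (s - a)) by (apply Rmult_le_compat_l; lra).
    nra.
  - (* [W] has a derivative [<= 0] at [m]: its slope just right of [m] is [< eps] *)
    destruct (Hgood m ltac:(lra) HN) as [D [HD HD0]].
    destruct (HD eps Heps) as [del Hdel].
    assert (0 < del) by apply cond_pos.
    exists (del / 2). split; [lra|]. intros s Hs Hsb.
    assert (Hq := Hdel (s - m) ltac:(lra) ltac:(rewrite Rabs_right; lra)).
    replace (m + (s - m)) with s in Hq by ring.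
    assert (Hslope : W s - W m <= eps * (s - m)).
    { assert (Hlt : (W s - W m) / (s - m) < eps)
        by (generalize (Rle_abs ((W s - W m) / (s - m) - D)); lra).
      apply Rmult_lt_compat_r with (r := s - m) in Hlt; [|lra].
      unfold Rdiv in Hlt. rewrite Rmult_assoc, Rinv_l in Hlt by lra. lra. }
    intros eta Heta. destruct (Pm eta Heta) as [n Hn]. exists n.
    assert (L * covered n m <= L * covered n s)
      by (apply Rmult_le_compat_l; [lra|apply covered_mono; lra]).
    lra.
Qed.

Lemma growth_bound : W b <= W a + eps * (b - a) + L * (3 * eps) + eps.
Proof.
  assert (Pb : P b).
  { apply real_induction with a; try assumption.
    - intros eta Heta. exists O. rewrite covered_at_a. lra.
    - exact invariant_left.
    - intros m Hm Hupto. apply invariant_right; [assumption|apply Hupto; lra]. }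
  destruct (Pb eps Heps) as [n Hn].
  assert (L * covered n b <= L * (3 * eps)) by (apply Rmult_le_compat_l; [lra|apply covered_bound]).
  lra.
Qed.

End CoverArgument.

Lemma lipschitz_nonincreasing (W : R -> R) (a b L : R) (N : R -> Prop) :
  a <= b -> 0 <= L ->
  (forall s t, a <= s <= b -> a <= t <= b -> Rabs (W s - W t) <= L * Rabs (s - t)) ->
  null1 N ->
  (forall t, a < t <= b -> ~ N t -> exists D, derivable_pt_lim W t D /\ D <= 0) ->
  W b <= W a.
Proof.
  intros Hab HL Hlip HN Hgood.
  destruct (Req_dec a b) as [<-|Hne]; [lra|].
  assert (from_inside : forall a', a < a' <= b -> W b <= W a').
  { intros a' Ha'. apply le_epsilon. intros e He.
    set (c := b - a' + 3 * L + 1).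
    assert (Hc : 0 < c) by (unfold c; lra).
    destruct (HN (e / c) ltac:(apply Rdiv_lt_0_compat; lra)) as [lo [hi [Hlohi [Hcov Hsum]]]].
    assert (Hgr := growth_bound W a' b L (e / c) N lo hi ltac:(lra) HL
      ltac:(apply Rdiv_lt_0_compat; lra) ltac:(intros; apply Hlip; lra) Hlohi Hcov Hsum
      ltac:(intros; apply Hgood; [lra|assumption])).
    replace (W a' + e / c * (b - a') + L * (3 * (e / c)) + e / c) with (W a' + e / c * c) in Hgr
      by (unfold c; ring).
    replace (e / c * c) with e in Hgr by (field; lra). exact Hgr. }
  apply le_epsilon. intros e He.
  set (a' := Rmin b (a + e / (L + 1))).
  assert (Ha' : a < a' <= b)
    by (split; [apply Rmin_glb_lt; [lra|]; generalize (Rdiv_lt_0_compat e (L + 1) He ltac:(lra)); lra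
               |apply Rmin_l]).
  assert (Hstep : W a' - W a <= L * (a' - a)).
  { generalize (Hlip a' a ltac:(lra) ltac:(lra)) (Rle_abs (W a' - W a)).
    rewrite (Rabs_right (a' - a)) by lra. lra. }
  assert (L * (a' - a) <= e).
  { assert (a' - a <= e / (L + 1)) by (generalize (Rmin_r b (a + e / (L + 1))); unfold a'; lra).
    apply Rle_trans with ((L + 1) * (e / (L + 1))); [nra|right; field; lra]. }
  generalize (from_inside a' Ha'). lra.
Qed.

Lemma deriv_at_zero_of_nonneg f t l : (forall s, 0 <= s -> 0 <= f s) -> 0 < t -> f t = 0 ->
  derivable_pt_lim f t l -> l = 0.
Proof.
  intros Hnn Ht Hf Hd. destruct (Rtotal_order l 0) as [Hl|[Hl|Hl]]; auto; exfalso.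
  - destruct (Hd (- l / 2) ltac:(lra)) as [del Hdel]. assert (0 < del) by apply cond_pos.
    assert (Hq := Hdel (del / 2) ltac:(lra) ltac:(rewrite Rabs_right; lra)).
    rewrite Hf in Hq. assert (0 <= f (t + del / 2)) by (apply Hnn; lra).
    assert (0 <= (f (t + del / 2) - 0) / (del / 2))
      by (apply Rmult_le_pos; [lra|left; apply Rinv_0_lt_compat; lra]).
    generalize (Rle_abs ((f (t + del / 2) - 0) / (del / 2) - l)). lra.
  - destruct (Hd (l / 2) ltac:(lra)) as [del Hdel]. assert (0 < del) by apply cond_pos.
    set (h := Rmin (del / 2) (t / 2)).
    assert (Hh : 0 < h <= t / 2 /\ h <= del / 2)
      by (unfold h; split; [split; [apply Rmin_glb_lt; lra|apply Rmin_r]|apply Rmin_l]).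
    assert (Hq := Hdel (- h) ltac:(lra) ltac:(rewrite Rabs_Ropp, Rabs_right; lra)).
    rewrite Hf in Hq. assert (0 <= f (t + - h)) by (apply Hnn; lra).
    assert ((f (t + - h) - 0) / - h <= 0).
    { unfold Rdiv. rewrite Rinv_opp.
      assert (0 <= (f (t + - h) - 0) * / h)
        by (apply Rmult_le_pos; [lra|left; apply Rinv_0_lt_compat; lra]). lra. }
    generalize (Rle_abs (- ((f (t + - h) - 0) / - h - l))). rewrite Rabs_Ropp. lra.
Qed.


Lemma abs_le_sqrt_add a s : 0 <= s -> Rabs a <= sqrt (a ^ 2 + s).
Proof.
  intro. rewrite <- sqrt_Rsqr_abs. apply sqrt_le_1_alt. unfold Rsqr. simpl. lra.
Qed.

Lemma vE_le_vnorm v : Rabs (vE v) <= vnorm v.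
Proof.
  unfold vnorm. replace (vE v ^ 2 + vM v ^ 2 + vF v ^ 2 + vMs v ^ 2) with
    (vE v ^ 2 + (vM v ^ 2 + vF v ^ 2 + vMs v ^ 2)) by ring.
  apply abs_le_sqrt_add. generalize (pow2_ge_0 (vM v)) (pow2_ge_0 (vF v)) (pow2_ge_0 (vMs v)); lra.
Qed.

Lemma vM_le_vnorm v : Rabs (vM v) <= vnorm v.
Proof.
  unfold vnorm. replace (vE v ^ 2 + vM v ^ 2 + vF v ^ 2 + vMs v ^ 2) with
    (vM v ^ 2 + (vE v ^ 2 + vF v ^ 2 + vMs v ^ 2)) by ring.
  apply abs_le_sqrt_add. generalize (pow2_ge_0 (vE v)) (pow2_ge_0 (vF v)) (pow2_ge_0 (vMs v)); lra.
Qed.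

Lemma vF_le_vnorm v : Rabs (vF v) <= vnorm v.
Proof.
  unfold vnorm. replace (vE v ^ 2 + vM v ^ 2 + vF v ^ 2 + vMs v ^ 2) with
    (vF v ^ 2 + (vE v ^ 2 + vM v ^ 2 + vMs v ^ 2)) by ring.
  apply abs_le_sqrt_add. generalize (pow2_ge_0 (vE v)) (pow2_ge_0 (vM v)) (pow2_ge_0 (vMs v)); lra.
Qed.

Lemma vMs_le_vnorm v : Rabs (vMs v) <= vnorm v.
Proof.
  unfold vnorm. replace (vE v ^ 2 + vM v ^ 2 + vF v ^ 2 + vMs v ^ 2) with
    (vMs v ^ 2 + (vE v ^ 2 + vM v ^ 2 + vF v ^ 2)) by ring.
  apply abs_le_sqrt_add. generalize (pow2_ge_0 (vE v)) (pow2_ge_0 (vM v)) (pow2_ge_0 (vF v)); lra.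
Qed.

Lemma vnorm_le_sum v : vnorm v <= Rabs (vE v) + Rabs (vM v) + Rabs (vF v) + Rabs (vMs v).
Proof.
  assert (Hpos := conj (Rabs_pos (vE v)) (conj (Rabs_pos (vM v)) (conj (Rabs_pos (vF v)) (Rabs_pos (vMs v))))).
  unfold vnorm. rewrite <- (sqrt_pow2 (Rabs (vE v) + Rabs (vM v) + Rabs (vF v) + Rabs (vMs v))) by lra.
  apply sqrt_le_1_alt.
  rewrite <- (pow2_abs (vE v)), <- (pow2_abs (vM v)), <- (pow2_abs (vF v)), <- (pow2_abs (vMs v)).
  nra.
Qed.

Lemma vsubE y x : vE (vsub y x) = vE y - vE x. Proof. unfold vsub, vadd, vscale; simpl; ring. Qed.
Lemma vsubM y x : vM (vsub y x) = vM y - vM x. Proof. unfold vsub, vadd, vscale; simpl; ring. Qed.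
Lemma vsubF y x : vF (vsub y x) = vF y - vF x. Proof. unfold vsub, vadd, vscale; simpl; ring. Qed.
Lemma vsubMs y x : vMs (vsub y x) = vMs y - vMs x. Proof. unfold vsub, vadd, vscale; simpl; ring. Qed.

Lemma null4_empty : null4 (fun _ => False).
Proof.
  intros eps He. exists (fun _ => vzero), (fun _ => vzero). split; [|split].
  - intros; simpl; lra.
  - intros x [].
  - intro n. assert (Hz : forall m, sum_f_R0 (fun _ => box_vol vzero vzero) m = 0).
    { induction m as [|m IH]; [unfold box_vol; simpl; ring|]. rewrite tech5, IH. unfold box_vol; simpl; ring. }
    rewrite Hz. exact He.
Qed.

Definition lin (c1 c2 c3 c4 : R) (v : V4) : R :=
  c1 * vE v + c2 * vM v + c3 * vF v + c4 * vMs v.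

Lemma lin_lipschitz c1 c2 c3 c4 y x :
  Rabs (lin c1 c2 c3 c4 y - lin c1 c2 c3 c4 x) <=
  (Rabs c1 + Rabs c2 + Rabs c3 + Rabs c4) * vnorm (vsub y x).
Proof.
  replace (lin c1 c2 c3 c4 y - lin c1 c2 c3 c4 x) with (lin c1 c2 c3 c4 (vsub y x))
    by (unfold lin; rewrite vsubE, vsubM, vsubF, vsubMs; ring).
  set (v := vsub y x). unfold lin.
  assert (Hterm : forall c w, Rabs w <= vnorm v -> Rabs (c * w) <= Rabs c * vnorm v).
  { intros. rewrite Rabs_mult. apply Rmult_le_compat_l; [apply Rabs_pos|assumption]. }
  generalize (Hterm c1 _ (vE_le_vnorm v)) (Hterm c2 _ (vM_le_vnorm v))
    (Hterm c3 _ (vF_le_vnorm v)) (Hterm c4 _ (vMs_le_vnorm v))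
    (Rabs_triang (c1 * vE v + c2 * vM v + c3 * vF v) (c4 * vMs v))
    (Rabs_triang (c1 * vE v + c2 * vM v) (c3 * vF v))
    (Rabs_triang (c1 * vE v) (c2 * vM v)).
  lra.
Qed.

Lemma halfspace_convex c1 c2 c3 c4 r : convex (fun v => lin c1 c2 c3 c4 v <= r).
Proof.
  intros x y l Hx Hy Hl.
  replace (lin c1 c2 c3 c4 (vadd (vscale l x) (vscale (1 - l) y))) with
    (l * lin c1 c2 c3 c4 x + (1 - l) * lin c1 c2 c3 c4 y) by (unfold lin, vadd, vscale; simpl; ring).
  nra.
Qed.

Lemma halfspace_closed c1 c2 c3 c4 r : closed4 (fun v => lin c1 c2 c3 c4 v <= r).
Proof.
  intros x Hx. set (A := Rabs c1 + Rabs c2 + Rabs c3 + Rabs c4).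
  assert (0 <= A) by (unfold A; generalize (Rabs_pos c1) (Rabs_pos c2) (Rabs_pos c3) (Rabs_pos c4); lra).
  apply Rnot_lt_le. intro Hlt.
  set (e := (lin c1 c2 c3 c4 x - r) / (A + 1)).
  assert (He : 0 < e) by (unfold e; apply Rdiv_lt_0_compat; lra).
  destruct (Hx e He) as [y [Hy Hye]].
  assert (Hd := lin_lipschitz c1 c2 c3 c4 y x). fold A in Hd.
  assert (A * vnorm (vsub y x) <= A * e) by (apply Rmult_le_compat_l; lra).
  assert (A * e < lin c1 c2 c3 c4 x - r).
  { unfold e. apply Rmult_lt_reg_r with (A + 1); [lra|].
    replace (A * ((lin c1 c2 c3 c4 x - r) / (A + 1)) * (A + 1)) with (A * (lin c1 c2 c3 c4 x - r))
      by (field; lra). nra. }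
  generalize (Rabs_minus_sym (lin c1 c2 c3 c4 y) (lin c1 c2 c3 c4 x))
    (Rle_abs (lin c1 c2 c3 c4 x - lin c1 c2 c3 c4 y)). lra.
Qed.

(* If, near [x] in D', a linear functional of the field is at most [r] up to an
   arbitrarily small error, then so is that functional of every Filippov
   velocity at [x]: the half-space [lin <= r + eta] contains the sampled
   velocities (with no point excluded), hence their closed convex hull. *)
Lemma filippov_halfspace X x d c1 c2 c3 c4 r :
  (forall eta, 0 < eta -> exists e, 0 < e /\ forall y, Dp y -> vnorm (vsub y x) <= e ->
     lin c1 c2 c3 c4 (X y) <= r + eta) ->
  filippov_set X x d -> lin c1 c2 c3 c4 d <= r.
Proof.
  intros Hnear Hf. apply Rnot_lt_le. intro Hlt.
  set (eta := (lin c1 c2 c3 c4 d - r) / 2).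
  destruct (Hnear eta ltac:(unfold eta; lra)) as [e [He Hy]].
  assert (lin c1 c2 c3 c4 d <= r + eta).
  { apply (Hf e (fun _ => False) He null4_empty (fun v => lin c1 c2 c3 c4 v <= r + eta)
      (halfspace_convex _ _ _ _ _) (halfspace_closed _ _ _ _ _)).
    intros w [y [Hy1 [Hy2 [_ ->]]]]. apply Hy; assumption. }
  unfold eta in *. lra.
Qed.

Definition cont_in_Dp (f : V4 -> R) (x : V4) : Prop :=
  forall eta, 0 < eta -> exists e, 0 < e /\ forall y, Dp y -> vnorm (vsub y x) <= e ->
    Rabs (f y - f x) <= eta.

Lemma cont_const c x : cont_in_Dp (fun _ => c) x.
Proof. intros eta He. exists 1. split; [lra|]. intros. rewrite Rminus_diag, Rabs_R0. lra. Qed.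

Lemma cont_E x : cont_in_Dp vE x.
Proof. intros eta He. exists eta. split; [lra|]. intros. rewrite <- vsubE. generalize (vE_le_vnorm (vsub y x)); lra. Qed.
Lemma cont_M x : cont_in_Dp vM x.
Proof. intros eta He. exists eta. split; [lra|]. intros. rewrite <- vsubM. generalize (vM_le_vnorm (vsub y x)); lra. Qed.
Lemma cont_F x : cont_in_Dp vF x.
Proof. intros eta He. exists eta. split; [lra|]. intros. rewrite <- vsubF. generalize (vF_le_vnorm (vsub y x)); lra. Qed.
Lemma cont_Ms x : cont_in_Dp vMs x.
Proof. intros eta He. exists eta. split; [lra|]. intros. rewrite <- vsubMs. generalize (vMs_le_vnorm (vsub y x)); lra. Qed.

Lemma cont_plus f g x : cont_in_Dp f x -> cont_in_Dp g x -> cont_in_Dp (fun y => f y + g y) x.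
Proof.
  intros Hf Hg eta He. destruct (Hf (eta/2) ltac:(lra)) as [e1 [He1 H1]].
  destruct (Hg (eta/2) ltac:(lra)) as [e2 [He2 H2]].
  exists (Rmin e1 e2). split; [apply Rmin_glb_lt; lra|]. intros y Hy Hn.
  generalize (H1 y Hy ltac:(generalize (Rmin_l e1 e2); lra)) (H2 y Hy ltac:(generalize (Rmin_r e1 e2); lra)).
  replace (f y + g y - (f x + g x)) with ((f y - f x) + (g y - g x)) by ring.
  generalize (Rabs_triang (f y - f x) (g y - g x)). lra.
Qed.

Lemma cont_opp f x : cont_in_Dp f x -> cont_in_Dp (fun y => - f y) x.
Proof.
  intros Hf eta He. destruct (Hf eta He) as [e [He1 H1]]. exists e. split; [assumption|].
  intros. replace (- f y - - f x) with (- (f y - f x)) by ring. rewrite Rabs_Ropp. auto.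
Qed.

Lemma cont_minus f g x : cont_in_Dp f x -> cont_in_Dp g x -> cont_in_Dp (fun y => f y - g y) x.
Proof. intros. apply (cont_plus f (fun y => - g y)); [|apply cont_opp]; assumption. Qed.

Lemma cont_mult f g x : cont_in_Dp f x -> cont_in_Dp g x -> cont_in_Dp (fun y => f y * g y) x.
Proof.
  intros Hf Hg eta He.
  set (A := Rabs (f x) + Rabs (g x) + 1).
  assert (HA : 1 <= A) by (unfold A; generalize (Rabs_pos (f x)) (Rabs_pos (g x)); lra).
  set (d := Rmin 1 (eta / (3 * A))).
  assert (Hd : 0 < d) by (unfold d; apply Rmin_glb_lt; [lra|apply Rdiv_lt_0_compat; lra]).
  assert (Hd1 : d <= 1) by apply Rmin_l.
  assert (Hd2 : d * (3 * A) <= eta).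
  { unfold d. apply Rle_trans with (eta / (3 * A) * (3 * A)).
    - apply Rmult_le_compat_r; [lra|apply Rmin_r].
    - right. field. lra. }
  destruct (Hf d Hd) as [e1 [He1 H1]]. destruct (Hg d Hd) as [e2 [He2 H2]].
  exists (Rmin e1 e2). split; [apply Rmin_glb_lt; lra|]. intros y Hy Hn.
  generalize (H1 y Hy ltac:(generalize (Rmin_l e1 e2); lra)) (H2 y Hy ltac:(generalize (Rmin_r e1 e2); lra)).
  intros Ha Hb.
  replace (f y * g y - f x * g x) with
    ((f y - f x) * (g y - g x) + (f y - f x) * g x + f x * (g y - g x)) by ring.
  set (df := f y - f x) in *. set (dg := g y - g x) in *.
  generalize (Rabs_triang (df * dg + df * g x) (f x * dg)) (Rabs_triang (df * dg) (df * g x)).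
  rewrite !Rabs_mult. intros.
  generalize (Rabs_pos df) (Rabs_pos dg) (Rabs_pos (f x)) (Rabs_pos (g x)). intros.
  assert (Rabs df * Rabs dg <= d * d) by (apply Rmult_le_compat; lra).
  assert (Rabs df * Rabs (g x) <= d * Rabs (g x)) by (apply Rmult_le_compat_r; lra).
  assert (Rabs (f x) * Rabs dg <= Rabs (f x) * d) by (apply Rmult_le_compat_l; lra).
  assert (d * d <= d) by nra.
  unfold A in Hd2. nra.
Qed.

Lemma cont_inv f x : cont_in_Dp f x -> f x <> 0 -> cont_in_Dp (fun y => / f y) x.
Proof.
  intros Hf Hne eta He.
  set (a := Rabs (f x)). assert (Ha : 0 < a) by (apply Rabs_pos_lt; auto).
  assert (Hp : 0 < eta * a * a / 2) by (apply Rdiv_lt_0_compat; [repeat apply Rmult_lt_0_compat|]; lra).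
  set (d := Rmin (a / 2) (eta * a * a / 2)).
  assert (Hd : 0 < d) by (unfold d; apply Rmin_glb_lt; lra).
  destruct (Hf d Hd) as [e [He1 H1]]. exists e. split; [assumption|]. intros y Hy Hn.
  specialize (H1 y Hy Hn).
  assert (Hd1 : d <= a / 2) by apply Rmin_l. assert (Hd2 : d <= eta * a * a / 2) by apply Rmin_r.
  assert (Hfy : a / 2 <= Rabs (f y)).
  { generalize (Rabs_triang_inv (f x) (f y)). rewrite <- Rabs_Ropp in H1.
    replace (- (f y - f x)) with (f x - f y) in H1 by ring. fold a. lra. }
  assert (f y <> 0) by (intro E; rewrite E, Rabs_R0 in Hfy; lra).
  replace (/ f y - / f x) with ((f x - f y) / (f y * f x)) by (field; auto).
  unfold Rdiv. rewrite Rabs_mult, Rabs_inv, Rabs_mult. fold a.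
  rewrite <- Rabs_Ropp. replace (- (f x - f y)) with (f y - f x) by ring.
  assert (0 < Rabs (f y) * a) by (apply Rmult_lt_0_compat; lra).
  apply Rmult_le_reg_r with (Rabs (f y) * a); [assumption|].
  rewrite Rmult_assoc, Rinv_l, Rmult_1_r by lra.
  assert (a / 2 * a <= Rabs (f y) * a) by (apply Rmult_le_compat_r; lra).
  assert (eta * (a / 2 * a) <= eta * (Rabs (f y) * a)) by (apply Rmult_le_compat_l; lra).
  nra.
Qed.

Lemma cont_div f g x : cont_in_Dp f x -> cont_in_Dp g x -> g x <> 0 ->
  cont_in_Dp (fun y => f y / g y) x.
Proof. intros. apply (cont_mult f (fun y => / g y)); [|apply cont_inv]; assumption. Qed.

Lemma Rmax0_lipschitz a b : Rabs (Rmax 0 a - Rmax 0 b) <= Rabs (a - b).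
Proof.
  unfold Rmax. destruct (Rle_dec 0 a), (Rle_dec 0 b);
  unfold Rabs; repeat match goal with |- context[Rcase_abs ?x] => destruct (Rcase_abs x) end; lra.
Qed.

Lemma cont_max0 f x : cont_in_Dp f x -> cont_in_Dp (fun y => Rmax 0 (f y)) x.
Proof.
  intros Hf eta He. destruct (Hf eta He) as [e [He1 H1]]. exists e. split; [assumption|].
  intros y Hy Hn. generalize (Rmax0_lipschitz (f y) (f x)) (H1 y Hy Hn). lra.
Qed.

Lemma cont_pow2 f x : cont_in_Dp f x -> cont_in_Dp (fun y => f y ^ 2) x.
Proof.
  intro Hf. assert (Hm := cont_mult f f x Hf Hf).
  intros eta He. destruct (Hm eta He) as [e [He1 H1]]. exists e. split; [assumption|].
  intros y Hy Hn. simpl. rewrite !Rmult_1_r. apply H1; assumption.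
Qed.

Lemma cont_local f g x e0 : 0 < e0 ->
  (forall y, Dp y -> vnorm (vsub y x) <= e0 -> f y = g y) -> f x = g x ->
  cont_in_Dp g x -> cont_in_Dp f x.
Proof.
  intros He0 Heq Hx Hg eta He. destruct (Hg eta He) as [e [He1 H1]].
  exists (Rmin e e0). split; [apply Rmin_glb_lt; lra|]. intros y Hy Hn.
  rewrite Heq, Hx by (try assumption; generalize (Rmin_r e e0); lra).
  apply H1; [assumption|generalize (Rmin_l e e0); lra].
Qed.

Lemma filippov_lin_cont X x d c1 c2 c3 c4 :
  cont_in_Dp (fun y => lin c1 c2 c3 c4 (X y)) x ->
  filippov_set X x d -> lin c1 c2 c3 c4 d <= lin c1 c2 c3 c4 (X x).
Proof.
  intros Hc. apply filippov_halfspace. intros eta Heta.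
  destruct (Hc eta Heta) as [e [He Hy]]. exists e. split; [assumption|].
  intros y Hy1 Hy2. generalize (Hy y Hy1 Hy2) (Rle_abs (lin c1 c2 c3 c4 (X y) - lin c1 c2 c3 c4 (X x))).
  lra.
Qed.

Lemma filippov_lin_cont_eq X x d c1 c2 c3 c4 :
  cont_in_Dp (fun y => lin c1 c2 c3 c4 (X y)) x ->
  filippov_set X x d -> lin c1 c2 c3 c4 d = lin c1 c2 c3 c4 (X x).
Proof.
  intros Hc Hf. apply Rle_antisym; [apply filippov_lin_cont; assumption|].
  assert (Hneg : forall v, lin (-c1) (-c2) (-c3) (-c4) v = - lin c1 c2 c3 c4 v)
    by (intro; unfold lin; ring).
  assert (Hcneg : cont_in_Dp (fun y => lin (-c1) (-c2) (-c3) (-c4) (X y)) x).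
  { apply cont_local with (e0 := 1) (g := fun y => - lin c1 c2 c3 c4 (X y));
      [lra|intros; apply Hneg|apply Hneg|apply cont_opp; assumption]. }
  generalize (filippov_lin_cont X x d _ _ _ _ Hcneg Hf). rewrite !Hneg. lra.
Qed.

Lemma small_increment_of_zero_deriv g t e : 0 < e -> derivable_pt_lim g t 0 ->
  exists dg, 0 < dg /\ forall h, h <> 0 -> Rabs h < dg -> Rabs (g (t + h) - g t) <= e * Rabs h.
Proof.
  intros He Hg. destruct (Hg e He) as [dg Hdg]. exists dg. split; [apply cond_pos|].
  intros h Hh0 Hh. specialize (Hdg h Hh0 Hh). rewrite Rminus_0_r in Hdg.
  unfold Rdiv in Hdg. rewrite Rabs_mult, Rabs_inv in Hdg.
  assert (0 < Rabs h) by (apply Rabs_pos_lt; assumption).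
  set (q := Rabs (g (t + h) - g t)) in *.
  replace q with (q * / Rabs h * Rabs h) by (field; lra).
  apply Rmult_le_compat_r; lra.
Qed.

Lemma deriv_zero_of_lipschitz (f : R -> R) (z : R -> V4) t C del :
  0 <= C -> 0 < del -> has_deriv z t vzero ->
  (forall h, Rabs h < del -> Rabs (f (t + h) - f t) <= C * vnorm (vsub (z (t + h)) (z t))) ->
  derivable_pt_lim f t 0.
Proof.
  intros HC Hdel (HE & HM & HF & HS) Hlip eps Heps. simpl in HE, HM, HF, HS.
  set (e4 := eps / (4 * (C + 1))).
  assert (He4 : 0 < e4) by (unfold e4; apply Rdiv_lt_0_compat; lra).
  destruct (small_increment_of_zero_deriv _ t e4 He4 HE) as [d1 [Hd1 H1]].
  destruct (small_increment_of_zero_deriv _ t e4 He4 HM) as [d2 [Hd2 H2]].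
  destruct (small_increment_of_zero_deriv _ t e4 He4 HF) as [d3 [Hd3 H3]].
  destruct (small_increment_of_zero_deriv _ t e4 He4 HS) as [d4 [Hd4 H4]].
  set (dl := Rmin (Rmin (Rmin d1 d2) (Rmin d3 d4)) del).
  assert (Hdl : 0 < dl) by (unfold dl; repeat apply Rmin_glb_lt; lra).
  exists (mkposreal dl Hdl). simpl. intros h Hh0 Hh.
  assert (Hb : Rabs h < d1 /\ Rabs h < d2 /\ Rabs h < d3 /\ Rabs h < d4 /\ Rabs h < del).
  { unfold dl in Hh.
    generalize (Rmin_l (Rmin (Rmin d1 d2) (Rmin d3 d4)) del) (Rmin_r (Rmin (Rmin d1 d2) (Rmin d3 d4)) del)
      (Rmin_l (Rmin d1 d2) (Rmin d3 d4)) (Rmin_r (Rmin d1 d2) (Rmin d3 d4))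
      (Rmin_l d1 d2) (Rmin_r d1 d2) (Rmin_l d3 d4) (Rmin_r d3 d4). lra. }
  destruct Hb as (Hb1 & Hb2 & Hb3 & Hb4 & Hb5).
  assert (Hn := vnorm_le_sum (vsub (z (t + h)) (z t))).
  rewrite vsubE, vsubM, vsubF, vsubMs in Hn.
  generalize (H1 h Hh0 Hb1) (H2 h Hh0 Hb2) (H3 h Hh0 Hb3) (H4 h Hh0 Hb4). intros.
  assert (Hf : Rabs (f (t + h) - f t) <= C * (4 * e4 * Rabs h)).
  { apply Rle_trans with (1 := Hlip h Hb5). apply Rmult_le_compat_l; lra. }
  assert (Hq : C * (4 * e4) < eps).
  { unfold e4. replace (C * (4 * (eps / (4 * (C + 1))))) with (eps * (C / (C + 1))) by (field; lra).
    assert (C / (C + 1) < 1) by (apply Rmult_lt_reg_r with (C + 1); [lra|]; unfold Rdiv;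
      rewrite Rmult_assoc, Rinv_l by lra; lra).
    nra. }
  rewrite Rminus_0_r. unfold Rdiv. rewrite Rabs_mult, Rabs_inv.
  assert (0 < Rabs h) by (apply Rabs_pos_lt; assumption).
  apply Rmult_lt_reg_r with (Rabs h); [assumption|].
  rewrite Rmult_assoc, Rinv_l, Rmult_1_r by lra. nra.
Qed.


Lemma div_nonneg a b : 0 <= a -> 0 < b -> 0 <= a / b.
Proof. intros. apply Rmult_le_pos; [assumption|left; apply Rinv_0_lt_compat; assumption]. Qed.

(* the parallel sum [a*b/(a+b)] of two nonnegative reals is 1-Lipschitz in
   each argument (it is 0 when [a = b = 0]) *)
Definition parallel_sum (a b : R) := a * b / (a + b).

Lemma parallel_sum_comm a b : parallel_sum a b = parallel_sum b a.
Proof. unfold parallel_sum. rewrite Rplus_comm. unfold Rdiv. ring. Qed.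

Lemma parallel_sum_lipschitz_l a b y : 0 <= a -> 0 <= b -> 0 <= y ->
  Rabs (parallel_sum a y - parallel_sum b y) <= Rabs (a - b).
Proof.
  intros. unfold parallel_sum. destruct (Req_dec y 0) as [->|Hy].
  - replace (a * 0 / (a + 0) - b * 0 / (b + 0)) with 0 by (unfold Rdiv; ring).
    rewrite Rabs_R0. apply Rabs_pos.
  - replace (a * y / (a + y) - b * y / (b + y)) with ((a - b) * (y * y / ((a + y) * (b + y))))
      by (field; lra).
    assert (Hq : 0 <= y * y / ((a + y) * (b + y)) <= 1).
    { split; [apply div_nonneg; nra|].
      apply Rmult_le_reg_r with ((a + y) * (b + y)); [nra|].
      unfold Rdiv. rewrite Rmult_assoc, Rinv_l by nra. nra. }
    rewrite Rabs_mult, (Rabs_right (y * y / ((a + y) * (b + y)))) by lra.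
    generalize (Rabs_pos (a - b)). nra.
Qed.

Lemma parallel_sum_lipschitz a1 b1 a2 b2 : 0 <= a1 -> 0 <= b1 -> 0 <= a2 -> 0 <= b2 ->
  Rabs (parallel_sum a1 b1 - parallel_sum a2 b2) <= Rabs (a1 - a2) + Rabs (b1 - b2).
Proof.
  intros. replace (parallel_sum a1 b1 - parallel_sum a2 b2) with
    ((parallel_sum a1 b1 - parallel_sum a2 b1) + (parallel_sum b1 a2 - parallel_sum b2 a2))
    by (rewrite (parallel_sum_comm b1 a2), (parallel_sum_comm b2 a2); ring).
  generalize (Rabs_triang (parallel_sum a1 b1 - parallel_sum a2 b1) (parallel_sum b1 a2 - parallel_sum b2 a2))
    (parallel_sum_lipschitz_l a1 a2 b1 H H1 H0) (parallel_sum_lipschitz_l b1 b2 a2 H0 H2 H1). lra.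
Qed.

(* The nonquadratic part of the Lyapunov function,
   [Phi M S = (S - theta M)^2 / (S + theta M)], vanishes exactly on the
   "target ratio" [S = theta M]; [Phix] and [Phiy] are its partial derivatives
   with respect to [theta M] and [S]. *)
Section RatioPenalty.
Variable theta : R.
Hypothesis Htheta : 0 < theta.

Definition Phi (M S : R) := (S - theta * M) ^ 2 / (S + theta * M).
Definition Phix (M S : R) := - (S - theta * M) * (3 * S + theta * M) / (S + theta * M) ^ 2.
Definition Phiy (M S : R) := (S - theta * M) * (S + 3 * theta * M) / (S + theta * M) ^ 2.

Lemma Phi_nonneg M S : 0 <= M -> 0 <= S -> 0 <= Phi M S.
Proof.
  intros. unfold Phi. destruct (Req_dec (S + theta * M) 0) as [E|E].
  - unfold Rdiv. rewrite E, Rinv_0, Rmult_0_r. lra.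
  - apply div_nonneg; [apply pow2_ge_0|nra].
Qed.

Lemma Phi_le_sum M S : 0 <= M -> 0 <= S -> Phi M S <= S + theta * M.
Proof.
  intros. unfold Phi. destruct (Req_dec (S + theta * M) 0) as [E|E].
  - unfold Rdiv. rewrite E, Rinv_0, Rmult_0_r. lra.
  - assert (0 < S + theta * M) by nra.
    apply Rmult_le_reg_r with (S + theta * M); [lra|].
    unfold Rdiv. rewrite Rmult_assoc, Rinv_l by lra.
    assert (0 <= S * (theta * M)) by (apply Rmult_le_pos; nra). nra.
Qed.

Lemma S_le_Phi M S : 0 <= M -> 0 <= S -> S <= 2 * theta * M + 6 * Phi M S.
Proof.
  intros. assert (HP := Phi_nonneg M S H H0).
  destruct (Rle_dec S (2 * theta * M)); [nra|].
  assert (0 < S + theta * M) by nra. unfold Phi in *.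
  assert (S <= 6 * ((S - theta * M) ^ 2 / (S + theta * M))).
  { apply Rmult_le_reg_r with (S + theta * M); [lra|].
    replace (6 * ((S - theta * M) ^ 2 / (S + theta * M)) * (S + theta * M)) with
      (6 * (S - theta * M) ^ 2) by (field; lra). nra. }
  nra.
Qed.

Lemma Phi_parallel_sum M S : 0 <= M -> 0 <= S ->
  Phi M S = S + theta * M - 4 * parallel_sum (theta * M) S.
Proof.
  intros. unfold Phi, parallel_sum. destruct (Req_dec (S + theta * M) 0) as [E|E].
  - assert (S = 0) by nra. assert (M = 0) by nra. subst. unfold Rdiv.
    rewrite Rmult_0_r, !Rplus_0_r, Rinv_0. ring.
  - field. intro. apply E. lra.
Qed.

Lemma Phi_lipschitz M1 S1 M2 S2 : 0 <= M1 -> 0 <= S1 -> 0 <= M2 -> 0 <= S2 ->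
  Rabs (Phi M1 S1 - Phi M2 S2) <= 5 * (theta * Rabs (M1 - M2) + Rabs (S1 - S2)).
Proof.
  intros. rewrite (Phi_parallel_sum M1 S1), (Phi_parallel_sum M2 S2) by assumption.
  assert (H3 := parallel_sum_lipschitz (theta * M1) S1 (theta * M2) S2 ltac:(nra) H0 ltac:(nra) H2).
  replace (theta * M1 - theta * M2) with (theta * (M1 - M2)) in H3 by ring.
  rewrite Rabs_mult, (Rabs_right theta) in H3 by lra.
  set (dP := parallel_sum (theta * M1) S1 - parallel_sum (theta * M2) S2) in *.
  replace (S1 + theta * M1 - 4 * parallel_sum (theta * M1) S1 -
           (S2 + theta * M2 - 4 * parallel_sum (theta * M2) S2)) with
    ((S1 - S2) + theta * (M1 - M2) - 4 * dP) by (unfold dP; ring).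
  generalize (Rabs_triang ((S1 - S2) + theta * (M1 - M2)) (- (4 * dP)))
    (Rabs_triang (S1 - S2) (theta * (M1 - M2))).
  rewrite Rabs_Ropp, !Rabs_mult, (Rabs_right theta), (Rabs_right 4) by lra.
  generalize (Rabs_pos (M1 - M2)) (Rabs_pos (S1 - S2)). intros. unfold Rminus at 1. nra.
Qed.

(* Euler's identity for the degree-one homogeneous function [Phi] *)
Lemma Phi_euler M S : 0 < S + theta * M -> theta * M * Phix M S + S * Phiy M S = Phi M S.
Proof. intro. unfold Phix, Phiy, Phi. field. lra. Qed.

End RatioPenalty.


Section Model.
Variables (p : Params) (theta alpha betas : R).
Hypothesis Hp : params_ok p.
Hypothesis Hds : deltaM p <= deltas p.
Hypothesis Htheta : 0 < theta.
Hypothesis HR : Rth p theta < 1.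
Hypothesis Halpha : 0 < alpha.
Hypothesis Hbetas : 0 < betas.

Local Ltac params :=
  destruct Hp as (HbE & HnuE & HdE & HdM & HdF & HdS & HK & Hnu & Hgam).

Definition Rt := Rth p theta.
(* value of [M / (M + gammas Ms)] on the target ratio [Ms = theta M] *)
Definition rho := 1 / (1 + gammas p * theta).
(* dissipation rates of E and F, and of the ratio penalty *)
Definition kE := (nuE p + deltaE p) * (1 - Rt) / (1 + Rt).
Definition kF := betaE p * (1 - Rt) / (1 + Rt).
Definition kS := Rmin (deltaM p) (betas / alpha).
Definition wF := 2 * betaE p / (deltaF p * (1 + Rt)).
Definition wM := kE / (2 * (1 - nu p) * nuE p).
Definition wPhi := alpha * (1 - Rt) / (1 + Rt).
Definition decay := Rmin (Rmin (kE / 2) (kF / wF)) kS.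

Lemma Rt_pos : 0 < Rt.
Proof.
  params. unfold Rt, Rth, Defs.R0.
  apply Rdiv_lt_0_compat; [apply Rdiv_lt_0_compat|nra].
  - apply Rmult_lt_0_compat; [apply Rmult_lt_0_compat|]; lra.
  - apply Rmult_lt_0_compat; lra.
Qed.

Lemma constants_pos : 0 < wF /\ 0 < wM /\ 0 < wPhi /\ 0 < kE /\ 0 < kF /\ 0 < kS /\ 0 < decay.
Proof.
  params. assert (HRt := Rt_pos). fold Rt in HR.
  assert (HkE : 0 < kE) by (unfold kE; apply Rdiv_lt_0_compat; nra).
  assert (0 < kF) by (unfold kF; apply Rdiv_lt_0_compat; nra).
  assert (0 < wF) by (unfold wF; apply Rdiv_lt_0_compat; nra).
  assert (0 < betas / alpha) by (apply Rdiv_lt_0_compat; lra).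
  assert (0 < kS) by (unfold kS; apply Rmin_glb_lt; lra).
  repeat split; try assumption.
  - unfold wM. apply Rdiv_lt_0_compat; [exact HkE|nra].
  - unfold wPhi. apply Rdiv_lt_0_compat; nra.
  - unfold decay. repeat apply Rmin_glb_lt; try lra. apply Rdiv_lt_0_compat; lra.
Qed.

(* The weights are tuned so that the linear part of the Lyapunov derivative
   dissipates at rates [kE] and [kF]. *)
Lemma weights_balance :
  wF * nu p * nuE p * rho = (nuE p + deltaE p) - kE /\
  betaE p - wF * deltaF p = - kF /\
  wM * ((1 - nu p) * nuE p) = kE / 2.
Proof.
  params. assert (HRt := Rt_pos). fold Rt in HR. split; [|split].
  - assert (HRe : betaE p * nu p * nuE p * rho = Rt * (deltaF p * (nuE p + deltaE p))).
    { unfold rho, Rt, Rth, Defs.R0. field. repeat split; nra. }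
    replace (wF * nu p * nuE p * rho) with (2 / (deltaF p * (1 + Rt)) * (betaE p * nu p * nuE p * rho))
      by (unfold wF; field; lra).
    rewrite HRe. unfold kE. field. lra.
  - unfold wF, kF. field. lra.
  - unfold wM. field. repeat split; nra.
Qed.

Definition Gnd (E M S : R) : R :=
  gammas p * psi p theta * E * (theta * M + S) ^ 2
      / (alpha * (M + gammas p * S) * (3 * theta * M + S))
    + ((1 - nu p) * nuE p * theta * E - theta * deltaM p * M) * (theta * M + 3 * S)
      / (3 * theta * M + S)
    + deltas p * S
    + betas / alpha * (theta * M - S).

Lemma G_nondegenerate x : vM x + vMs x <> 0 ->
  G p theta alpha betas x = Gnd (vE x) (vM x) (vMs x).
Proof. intro. unfold G, Gnd. destruct (Req_EM_T (vM x + vMs x) 0); [contradiction|reflexivity]. Qed.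

(* the part of the F-equation caused by the ratio [M/(M + gammas Ms)]
   deviating from its target value [rho] *)
Definition cross (E M S : R) :=
  wF * nu p * nuE p * gammas p * rho * E * (S - theta * M) / (M + gammas p * S).

(* the dissipation of the ratio penalty produced by the [betas] term of the
   feedback; it dominates the penalty itself ([Phi_le_Qpen]) *)
Definition Qpen (M S : R) := (S - theta * M) ^ 2 * (S + 3 * theta * M) / (S + theta * M) ^ 2.

Lemma F_rate_split E M F S : 0 < M + gammas p * S ->
  wF * (nu p * nuE p * E * (M / (M + gammas p * S)) - deltaF p * F) =
  wF * nu p * nuE p * rho * E - wF * deltaF p * F - cross E M S.
Proof.
  params. intro. unfold cross, rho. field. repeat split; nra.
Qed.

(* The feedback is designed to make the penalty's derivative cancel the
   cross term up to a strictly dissipative remainder. *)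
Lemma feedback_identity E M S : 0 <= M -> 0 <= S -> 0 < M + S ->
  wPhi * (theta * Phix theta M S * ((1 - nu p) * nuE p * E - deltaM p * M)
          + Phiy theta M S * (Gnd E M S - deltas p * S)) =
  cross E M S - wPhi * (betas / alpha) * Qpen M S.
Proof.
  params. intros HM HS HMS. assert (HRt := Rt_pos). fold Rt in HR.
  assert (0 < S + theta * M) by nra.
  assert (0 < M + gammas p * S) by nra.
  assert (0 < 3 * theta * M + S) by nra.
  unfold wPhi, cross, Qpen, Gnd, Phix, Phiy, psi, wF, rho. fold Rt.
  field. repeat split; nra.
Qed.

Lemma Phi_le_Qpen M S : 0 <= M -> 0 <= S -> 0 < S + theta * M -> Phi theta M S <= Qpen M S.
Proof.
  intros HM HS Hpos. unfold Qpen.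
  replace ((S - theta * M) ^ 2 * (S + 3 * theta * M) / (S + theta * M) ^ 2) with
    (Phi theta M S * ((S + 3 * theta * M) / (S + theta * M))) by (unfold Phi; field; lra).
  assert (1 <= (S + 3 * theta * M) / (S + theta * M)).
  { apply Rmult_le_reg_r with (S + theta * M); [lra|].
    unfold Rdiv. rewrite Rmult_assoc, Rinv_l by lra. nra. }
  generalize (Phi_nonneg theta Htheta M S HM HS). nra.
Qed.

Lemma cross_nonneg E M S : 0 <= E -> 0 <= M -> theta * M <= S -> 0 < M + gammas p * S ->
  0 <= cross E M S.
Proof.
  params. intros. destruct constants_pos as (HwF & _).
  assert (0 < rho) by (unfold rho; apply Rdiv_lt_0_compat; nra).
  assert (Hc : 0 <= wF * nu p * nuE p * gammas p * rho).
  { apply Rmult_le_pos; [|lra]. apply Rmult_le_pos; [|lra].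
    apply Rmult_le_pos; [|lra]. apply Rmult_le_pos; lra. }
  unfold cross. apply div_nonneg; [|assumption].
  apply Rmult_le_pos; [apply Rmult_le_pos|]; lra.
Qed.

Lemma switched_off_bound E M S : 0 <= E -> 0 <= M -> theta * M <= S -> 0 < S + theta * M ->
  theta * Phix theta M S * ((1 - nu p) * nuE p * E - deltaM p * M)
  + Phiy theta M S * (0 - deltas p * S) <= - deltaM p * Phi theta M S.
Proof.
  params. intros HE HM Hge Hpos.
  assert (Hsq : 0 < / (S + theta * M) ^ 2) by (apply Rinv_0_lt_compat; nra).
  assert (HPx : Phix theta M S <= 0).
  { unfold Phix, Rdiv.
    replace (- (S - theta * M) * (3 * S + theta * M) * / (S + theta * M) ^ 2) with
      (- ((S - theta * M) * (3 * S + theta * M) * / (S + theta * M) ^ 2)) by ring.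
    assert (0 <= (S - theta * M) * (3 * S + theta * M) * / (S + theta * M) ^ 2)
      by (apply Rmult_le_pos; [apply Rmult_le_pos|]; lra).
    lra. }
  assert (HPy : 0 <= S * Phiy theta M S).
  { unfold Phiy, Rdiv.
    apply Rmult_le_pos; [lra|]. apply Rmult_le_pos; [apply Rmult_le_pos|]; nra. }
  assert (Hin : Phix theta M S * (theta * (1 - nu p) * nuE p * E) <= 0)
    by (assert (0 <= theta * (1 - nu p) * nuE p * E) by (repeat apply Rmult_le_pos; lra); nra).
  assert (deltaM p * (S * Phiy theta M S) <= deltas p * (S * Phiy theta M S))
    by (apply Rmult_le_compat_r; lra).
  assert (Hsplit : theta * Phix theta M S * ((1 - nu p) * nuE p * E - deltaM p * M)
    + Phiy theta M S * (0 - deltas p * S) =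
    Phix theta M S * (theta * (1 - nu p) * nuE p * E)
    - deltaM p * (theta * M * Phix theta M S) - deltas p * (S * Phiy theta M S)) by ring.
  rewrite Hsplit, <- (Phi_euler theta M S Hpos). lra.
Qed.

Lemma feedback_term_bound E M S : 0 <= E -> 0 <= M -> 0 <= S -> 0 < M + S ->
  wPhi * (theta * Phix theta M S * ((1 - nu p) * nuE p * E - deltaM p * M)
          + Phiy theta M S * (Rmax 0 (Gnd E M S) - deltas p * S)) <=
  cross E M S - wPhi * kS * Phi theta M S.
Proof.
  params. intros HE HM HS HMS. destruct constants_pos as (_ & _ & HwPhi & _ & _ & HkS & _).
  assert (Hpos : 0 < S + theta * M) by nra.
  assert (Hg : 0 < M + gammas p * S) by nra.
  assert (HPhi := Phi_nonneg theta Htheta M S HM HS).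
  assert (HkS1 : kS <= deltaM p) by apply Rmin_l.
  assert (HkS2 : kS <= betas / alpha) by apply Rmin_r.
  assert (Hpen : kS * Phi theta M S <= betas / alpha * Qpen M S)
    by (apply Rmult_le_compat; [lra|assumption|assumption|apply Phi_le_Qpen; assumption]).
  assert (Hid := feedback_identity E M S HM HS HMS).
  set (A := (1 - nu p) * nuE p * E - deltaM p * M) in *.
  destruct (Rle_dec 0 (Gnd E M S)) as [HG|HG].
  - (* control active: the feedback identity applies as is *)
    rewrite Rmax_right by lra. nra.
  - rewrite Rmax_left by lra.
    destruct (Rlt_dec S (theta * M)) as [Hlt|Hge].
    + (* below the target ratio, switching the control off only helps *)
      assert (HPy : Phiy theta M S <= 0).
      { unfold Phiy, Rdiv. assert (0 < / (S + theta * M) ^ 2) by (apply Rinv_0_lt_compat; nra).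
        assert ((S - theta * M) * (S + 3 * theta * M) <= 0) by nra. nra. }
      assert (0 <= wPhi * (Phiy theta M S * Gnd E M S)) by (apply Rmult_le_pos; nra).
      nra.
    + (* above the target ratio, the natural decay suffices *)
      assert (Hoff := switched_off_bound E M S HE HM ltac:(lra) Hpos).
      assert (Hcr := cross_nonneg E M S HE HM ltac:(lra) Hg).
      assert (kS * Phi theta M S <= deltaM p * Phi theta M S) by (apply Rmult_le_compat_r; lra).
      fold A in Hoff. nra.
Qed.

Definition Xnd (y : V4) : V4 :=
  mkV (betaE p * vF y * (1 - vE y / K p) - (nuE p + deltaE p) * vE y)
      ((1 - nu p) * nuE p * vE y - deltaM p * vM y)
      (nu p * nuE p * vE y * (vM y / (vM y + gammas p * vMs y)) - deltaF p * vF y)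
      (Rmax 0 (Gnd (vE y) (vM y) (vMs y)) - deltas p * vMs y).

Lemma Xcl_nondegenerate y : vM y + vMs y <> 0 -> Xcl p theta alpha betas y = Xnd y.
Proof.
  intro Hne. unfold Xcl, Xnd, u. rewrite G_nondegenerate by assumption.
  destruct (Req_EM_T (vM y + vMs y) 0); [contradiction|reflexivity].
Qed.

Definition V (x : V4) : R :=
  vE x + wF * vF x + wM * vM x + wPhi * Phi theta (vM x) (vMs x).

(* the differential of [V] at [x], applied to a velocity [v] *)
Definition dV (x v : V4) : R :=
  lin 1 (wM + wPhi * theta * Phix theta (vM x) (vMs x)) wF
        (wPhi * Phiy theta (vM x) (vMs x)) v.

Lemma decay_le : decay <= kE / 2 /\ decay * wF <= kF /\ decay <= kS /\ decay <= deltaM p.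
Proof.
  destruct constants_pos as (HwF & _).
  assert (H1 := Rmin_l (Rmin (kE / 2) (kF / wF)) kS).
  assert (H2 := Rmin_r (Rmin (kE / 2) (kF / wF)) kS).
  assert (H3 := Rmin_l (kE / 2) (kF / wF)). assert (H4 := Rmin_r (kE / 2) (kF / wF)).
  assert (H5 : kS <= deltaM p) by apply Rmin_l.
  fold decay in H1, H2. repeat split; try lra.
  apply Rmult_le_reg_r with (/ wF); [apply Rinv_0_lt_compat; assumption|].
  rewrite Rmult_assoc, Rinv_r by lra. fold (kF / wF). lra.
Qed.

Lemma linear_part_balance E M F :
  betaE p * F - (nuE p + deltaE p) * E + wM * ((1 - nu p) * nuE p * E - deltaM p * M)
  + (wF * nu p * nuE p * rho * E - wF * deltaF p * F) =
  - (kE / 2) * E - kF * F - wM * deltaM p * M.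
Proof.
  destruct weights_balance as (HwbF & HwbE & HwbM).
  replace (wF * nu p * nuE p * rho * E) with ((wF * nu p * nuE p * rho) * E) by ring.
  rewrite HwbF. replace (wM * ((1 - nu p) * nuE p * E - deltaM p * M)) with
    (wM * ((1 - nu p) * nuE p) * E - wM * deltaM p * M) by ring.
  rewrite HwbM. replace (wF * deltaF p) with (betaE p + kF) by lra. lra.
Qed.

Lemma V_dissipation x : Dp x -> vM x + vMs x <> 0 ->
  dV x (Xcl p theta alpha betas x) <= - decay * V x.
Proof.
  params. destruct constants_pos as (HwF & HwM & HwPhi & HkE & HkF & HkS & Hdec).
  destruct x as [E M F S]. unfold Dp; simpl. intros (HE & HM & HF & HS) Hne.
  assert (HMS : 0 < M + S) by lra.
  assert (Hg : 0 < M + gammas p * S) by nra.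
  rewrite Xcl_nondegenerate by (simpl; assumption).
  unfold dV, lin, Xnd, V; simpl.
  set (A := (1 - nu p) * nuE p * E - deltaM p * M).
  assert (HXE : betaE p * F * (1 - E / K p) - (nuE p + deltaE p) * E <=
                betaE p * F - (nuE p + deltaE p) * E).
  { assert (0 <= betaE p * F * (E / K p)) by (apply Rmult_le_pos; [nra|apply div_nonneg; lra]). nra. }
  assert (Hfb := feedback_term_bound E M S HE HM HS HMS). fold A in Hfb.
  assert (Hlin := linear_part_balance E M F). fold A in Hlin.
  destruct decay_le as (Hd1 & Hd2 & Hd3 & Hd4).
  assert (HPhi := Phi_nonneg theta Htheta M S HM HS).
  assert (Hregroup :
    1 * (betaE p * F * (1 - E / K p) - (nuE p + deltaE p) * E)
    + (wM + wPhi * theta * Phix theta M S) * A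
    + wF * (nu p * nuE p * E * (M / (M + gammas p * S)) - deltaF p * F)
    + wPhi * Phiy theta M S * (Rmax 0 (Gnd E M S) - deltas p * S) =
    (betaE p * F * (1 - E / K p) - (nuE p + deltaE p) * E) + wM * A
    + wF * (nu p * nuE p * E * (M / (M + gammas p * S)) - deltaF p * F)
    + wPhi * (theta * Phix theta M S * A + Phiy theta M S * (Rmax 0 (Gnd E M S) - deltas p * S)))
    by ring.
  rewrite Hregroup, (F_rate_split E M F S Hg). clear Hregroup.
  assert (decay * E <= kE / 2 * E) by (apply Rmult_le_compat_r; lra).
  assert (decay * wF * F <= kF * F) by (apply Rmult_le_compat_r; lra).
  assert (decay * (wM * M) <= deltaM p * (wM * M)) by (apply Rmult_le_compat_r; nra).
  assert (decay * (wPhi * Phi theta M S) <= kS * (wPhi * Phi theta M S))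
    by (apply Rmult_le_compat_r; nra).
  nra.
Qed.

Lemma V_nonneg x : Dp x -> 0 <= V x.
Proof.
  destruct constants_pos as (HwF & HwM & HwPhi & _).
  intros (H1 & H2 & H3 & H4). unfold V. generalize (Phi_nonneg theta Htheta _ _ H2 H4). nra.
Qed.

Definition LV := 1 + wF + wM + 5 * wPhi * (theta + 1).

Lemma LV_pos : 0 < LV.
Proof. destruct constants_pos as (HwF & HwM & HwPhi & _). unfold LV. nra. Qed.

Lemma V_lipschitz x y : Dp x -> Dp y -> Rabs (V x - V y) <= LV * vnorm (vsub x y).
Proof.
  destruct constants_pos as (HwF & HwM & HwPhi & _).
  intros (H1 & H2 & H3 & H4) (H5 & H6 & H7 & H8). unfold V, LV.
  assert (HP := Phi_lipschitz theta Htheta (vM x) (vMs x) (vM y) (vMs y) H2 H4 H6 H8).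
  generalize (vE_le_vnorm (vsub x y)) (vM_le_vnorm (vsub x y)) (vF_le_vnorm (vsub x y))
    (vMs_le_vnorm (vsub x y)). rewrite vsubE, vsubM, vsubF, vsubMs. intros.
  set (a := vE x - vE y) in *. set (b := vF x - vF y) in *. set (c := vM x - vM y) in *.
  set (d := Phi theta (vM x) (vMs x) - Phi theta (vM y) (vMs y)) in *.
  set (n := vnorm (vsub x y)) in *.
  replace (vE x + wF * vF x + wM * vM x + wPhi * Phi theta (vM x) (vMs x) -
    (vE y + wF * vF y + wM * vM y + wPhi * Phi theta (vM y) (vMs y))) with
    (a + wF * b + wM * c + wPhi * d) by (unfold a, b, c, d; ring).
  generalize (Rabs_triang (a + wF * b + wM * c) (wPhi * d)) (Rabs_triang (a + wF * b) (wM * c))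
    (Rabs_triang a (wF * b)).
  rewrite !Rabs_mult, (Rabs_right wF), (Rabs_right wM), (Rabs_right wPhi) by lra. intros.
  assert (wF * Rabs b <= wF * n) by (apply Rmult_le_compat_l; lra).
  assert (wM * Rabs c <= wM * n) by (apply Rmult_le_compat_l; lra).
  assert (wPhi * Rabs d <= wPhi * (5 * (theta * n + n))).
  { apply Rmult_le_compat_l; [lra|].
    assert (theta * Rabs c <= theta * n) by (apply Rmult_le_compat_l; lra). lra. }
  assert (0 <= n) by apply sqrt_pos.
  assert (0 <= (1 + wF + wM + 5 * wPhi * (theta + 1)) * n) by (apply Rmult_le_pos; nra).
  nra.
Qed.

Definition CV := 1 + 1 / wF + (1 + 2 * theta) / wM + 6 / wPhi.

Lemma CV_pos : 0 < CV.
Proof.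
  destruct constants_pos as (HwF & HwM & HwPhi & _). unfold CV.
  assert (0 < 1 / wF) by (apply Rdiv_lt_0_compat; lra).
  assert (0 < (1 + 2 * theta) / wM) by (apply Rdiv_lt_0_compat; lra).
  assert (0 < 6 / wPhi) by (apply Rdiv_lt_0_compat; lra). lra.
Qed.

Lemma norm_le_V x : Dp x -> vnorm x <= CV * V x.
Proof.
  destruct constants_pos as (HwF & HwM & HwPhi & _).
  intros Hx. assert (HV := V_nonneg x Hx). destruct Hx as (H1 & H2 & H3 & H4).
  assert (HP := Phi_nonneg theta Htheta _ _ H2 H4). assert (HS := S_le_Phi theta Htheta _ _ H2 H4).
  apply Rle_trans with (vE x + vM x + vF x + vMs x).
  { generalize (vnorm_le_sum x). rewrite !Rabs_right by lra. lra. }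
  unfold V in *.
  set (v := vE x + wF * vF x + wM * vM x + wPhi * Phi theta (vM x) (vMs x)) in *.
  assert (Hfrac : forall w c, 0 < w -> 0 <= c -> w * c <= v -> c <= v / w).
  { intros w c Hw Hc Hwc. apply Rmult_le_reg_r with w; [lra|].
    unfold Rdiv. rewrite Rmult_assoc, Rinv_l by lra. lra. }
  assert (vF x <= v / wF) by (apply Hfrac; unfold v; nra).
  assert (vM x <= v / wM) by (apply Hfrac; unfold v; nra).
  assert (Phi theta (vM x) (vMs x) <= v / wPhi) by (apply Hfrac; unfold v; nra).
  unfold CV. replace ((1 + 1 / wF + (1 + 2 * theta) / wM + 6 / wPhi) * v) with
    (v + v / wF + (1 + 2 * theta) * (v / wM) + 6 * (v / wPhi)) by (field; lra).
  assert (2 * theta * vM x <= 2 * theta * (v / wM)) by (apply Rmult_le_compat_l; lra).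
  assert (vE x <= v) by (unfold v; nra).
  lra.
Qed.

Definition CV' := 1 + wF + wM + wPhi * (1 + theta).

Lemma CV'_pos : 0 < CV'.
Proof. destruct constants_pos as (HwF & HwM & HwPhi & _). unfold CV'. nra. Qed.

Lemma V_le_norm x : Dp x -> V x <= CV' * vnorm x.
Proof.
  destruct constants_pos as (HwF & HwM & HwPhi & _).
  intros (H1 & H2 & H3 & H4).
  assert (HP := Phi_le_sum theta Htheta _ _ H2 H4).
  generalize (vE_le_vnorm x) (vM_le_vnorm x) (vF_le_vnorm x) (vMs_le_vnorm x).
  rewrite !Rabs_right by lra. intros.
  unfold V, CV'. set (n := vnorm x) in *.
  assert (wF * vF x <= wF * n) by (apply Rmult_le_compat_l; lra).
  assert (wM * vM x <= wM * n) by (apply Rmult_le_compat_l; lra).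
  assert (wPhi * Phi theta (vM x) (vMs x) <= wPhi * (n + theta * n)).
  { apply Rle_trans with (wPhi * (vMs x + theta * vM x)); apply Rmult_le_compat_l; try lra.
    assert (theta * vM x <= theta * n) by (apply Rmult_le_compat_l; lra). lra. }
  assert (0 <= n) by apply sqrt_pos.
  assert (0 <= (1 + wF + wM + wPhi * (1 + theta)) * n) by (apply Rmult_le_pos; nra).
  nra.
Qed.

Lemma Xcl_cont_lin c1 c2 c3 c4 x : Dp x -> vM x + vMs x <> 0 ->
  cont_in_Dp (fun y => lin c1 c2 c3 c4 (Xcl p theta alpha betas y)) x.
Proof.
  params. intros (HE & HM & HF & HS) Hne.
  set (e0 := (vM x + vMs x) / 4). assert (He0 : 0 < e0) by (unfold e0; lra).
  apply cont_local with (e0 := e0) (g := fun y => lin c1 c2 c3 c4 (Xnd y)); [assumption| |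
    rewrite Xcl_nondegenerate by assumption; reflexivity|].
  - intros y Hy Hn. rewrite Xcl_nondegenerate; [reflexivity|].
    destruct Hy as (_ & HM' & _ & HS').
    generalize (vM_le_vnorm (vsub y x)) (vMs_le_vnorm (vsub y x)). rewrite vsubM, vsubMs.
    generalize (Rle_abs (vM x - vM y)) (Rle_abs (vMs x - vMs y)).
    rewrite (Rabs_minus_sym (vM x)), (Rabs_minus_sym (vMs x)). unfold e0 in Hn. lra.
  - unfold lin, Xnd, Gnd; simpl.
    repeat first [apply cont_minus | apply cont_plus | apply cont_div | apply cont_mult
      | apply cont_max0 | apply cont_E | apply cont_M | apply cont_F | apply cont_Ms
      | apply cont_const | apply cont_pow2].
    all: apply Rgt_not_eq; try (apply Rmult_lt_0_compat; [apply Rmult_lt_0_compat|]); nra.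
Qed.

Lemma V_chain z t d : has_deriv z t d -> Dp (z t) -> vM (z t) + vMs (z t) <> 0 ->
  derivable_pt_lim (fun s => V (z s)) t (dV (z t) d).
Proof.
  intros (HE & HM & HF & HS) (H1 & H2 & H3 & H4) Hne.
  assert (Hw : vMs (z t) + theta * vM (z t) <> 0) by (apply Rgt_not_eq; nra).
  assert (Hu := derivable_pt_lim_minus _ _ _ _ _ HS (derivable_pt_lim_scal _ theta _ _ HM)).
  assert (Hv := derivable_pt_lim_plus _ _ _ _ _ HS (derivable_pt_lim_scal _ theta _ _ HM)).
  assert (Hq := derivable_pt_lim_div _ _ _ _ _ (derivable_pt_lim_mult _ _ _ _ _ Hu Hu) Hv Hw).
  assert (Htot := derivable_pt_lim_plus _ _ _ _ _
    (derivable_pt_lim_plus _ _ _ _ _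
       (derivable_pt_lim_plus _ _ _ _ _ HE (derivable_pt_lim_scal _ wF _ _ HF))
       (derivable_pt_lim_scal _ wM _ _ HM))
    (derivable_pt_lim_scal _ wPhi _ _ Hq)).
  match type of Htot with derivable_pt_lim ?f _ ?l =>
    apply (derivable_pt_lim_ext f);
    [intro s; unfold V, Phi, plus_fct, minus_fct, mult_fct, mult_real_fct, div_fct, Rdiv; simpl; ring
    | replace (dV (z t) d) with l; [exact Htot|]] end.
  unfold dV, lin, Phix, Phiy, Rsqr, plus_fct, minus_fct, mult_fct, mult_real_fct, div_fct. field. exact Hw.
Qed.

Lemma Xcl_cont_E x : cont_in_Dp (fun y => lin 1 0 0 0 (Xcl p theta alpha betas y)) x.
Proof.
  params. apply cont_local with (e0 := 1)
    (g := fun y => betaE p * vF y * (1 - vE y / K p) - (nuE p + deltaE p) * vE y); [lra| | |].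
  1, 2: intros; unfold lin, Xcl; simpl; ring.
  repeat first [apply cont_minus | apply cont_div | apply cont_mult
    | apply cont_E | apply cont_F | apply cont_const].
  lra.
Qed.

Lemma Xcl_cont_M x : cont_in_Dp (fun y => lin 0 1 0 0 (Xcl p theta alpha betas y)) x.
Proof.
  apply cont_local with (e0 := 1)
    (g := fun y => (1 - nu p) * nuE p * vE y - deltaM p * vM y); [lra| | |].
  1, 2: intros; unfold lin, Xcl; simpl; ring.
  apply cont_minus; apply cont_mult; auto using cont_const, cont_E, cont_M.
Qed.

(* A Filippov solution of D' meeting [M = Ms = 0] at a positive time is at
   the origin with velocity 0: the constraint [M, Ms >= 0] forces the
   velocities of [M] and [Ms] to vanish, the M-equation then forces [E = 0],
   and the E-equation [F = 0]. *)
Lemma degenerate_point z t d : (forall s, 0 <= s -> Dp (z s)) -> 0 < t ->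
  has_deriv z t d -> filippov_set (Xcl p theta alpha betas) (z t) d ->
  vM (z t) + vMs (z t) = 0 -> z t = vzero /\ d = vzero.
Proof.
  params. intros Hz Ht Hd Hf Hdeg.
  destruct Hd as (HzE & HzM & HzF & HzS).
  assert (Hzt := Hz t ltac:(lra)). destruct Hzt as (Z1 & Z2 & Z3 & Z4).
  assert (Hstat : forall (g : V4 -> R), (forall y, Dp y -> 0 <= g y) -> g (z t) = 0 ->
            forall l, derivable_pt_lim (fun s => g (z s)) t l -> l = 0).
  { intros g Hg Hg0 l Hl.
    apply (deriv_at_zero_of_nonneg (fun s => g (z s)) t); try assumption.
    intros s Hs. apply Hg, Hz, Hs. }
  assert (HM0 : vM (z t) = 0) by lra. assert (HS0 : vMs (z t) = 0) by lra.
  assert (dM0 : vM d = 0) by (apply (Hstat vM); [intros y (_ & H & _); exact H|assumption|exact HzM]).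
  assert (dS0 : vMs d = 0) by (apply (Hstat vMs); [intros y (_ & _ & _ & H); exact H|assumption|exact HzS]).
  assert (HE0 : vE (z t) = 0).
  { generalize (filippov_lin_cont_eq _ _ _ _ _ _ _ (Xcl_cont_M (z t)) Hf).
    unfold lin, Xcl; simpl. rewrite dM0, HM0. intro.
    assert (0 < (1 - nu p) * nuE p) by nra. nra. }
  assert (dE0 : vE d = 0) by (apply (Hstat vE); [intros y (H & _); exact H|assumption|exact HzE]).
  assert (HF0 : vF (z t) = 0).
  { generalize (filippov_lin_cont_eq _ _ _ _ _ _ _ (Xcl_cont_E (z t)) Hf).
    unfold lin, Xcl; simpl. rewrite dE0, HE0.
    replace (0 / K p) with 0 by (unfold Rdiv; ring). intro. nra. }
  assert (dF0 : vF d = 0) by (apply (Hstat vF); [intros y (_ & _ & H & _); exact H|assumption|exact HzF]).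
  split.
  - destruct (z t); simpl in *. subst. reflexivity.
  - destruct d; simpl in *. subst. reflexivity.
Qed.

Lemma V_zero : V vzero = 0.
Proof. unfold V, Phi, vzero, Rdiv; simpl. replace (0 + theta * 0) with 0 by ring. rewrite Rinv_0. ring. Qed.

Lemma V_decrease z t d : (forall s, 0 <= s -> Dp (z s)) -> 0 < t ->
  has_deriv z t d -> filippov_set (Xcl p theta alpha betas) (z t) d ->
  exists D, derivable_pt_lim (fun s => V (z s)) t D /\ D <= - decay * V (z t).
Proof.
  intros Hz Ht Hd Hf. assert (Hzt := Hz t ltac:(lra)).
  destruct (Req_dec (vM (z t) + vMs (z t)) 0) as [Hdeg|Hne].
  - destruct (degenerate_point z t d Hz Ht Hd Hf Hdeg) as [Hz0 Hd0].
    exists 0. rewrite Hz0, V_zero. split; [|lra].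
    apply (deriv_zero_of_lipschitz _ z t LV t); [generalize LV_pos; lra|assumption|rewrite <- Hd0; assumption|].
    intros h Hh. apply V_lipschitz; [apply Hz|apply Hzt].
    generalize (Rle_abs (- h)). rewrite Rabs_Ropp. lra.
  - exists (dV (z t) d). split; [apply V_chain; assumption|].
    apply Rle_trans with (2 := V_dissipation (z t) Hzt Hne).
    unfold dV. apply filippov_lin_cont; [apply Xcl_cont_lin; assumption|exact Hf].
Qed.

Lemma V_along_lipschitz z T : filippov_solution (Xcl p theta alpha betas) z -> 0 < T ->
  exists L, 0 <= L /\ forall s t, 0 <= s <= T -> 0 <= t <= T ->
    Rabs (V (z s) - V (z t)) <= L * Rabs (s - t).
Proof.
  intros (Hz & Hlip & _) HT. destruct (Hlip T HT) as [Lz HLz].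
  exists (LV * Rabs Lz). split; [apply Rmult_le_pos; [generalize LV_pos; lra|apply Rabs_pos]|].
  intros s t Hs Ht. apply Rle_trans with (1 := V_lipschitz _ _ (Hz s ltac:(lra)) (Hz t ltac:(lra))).
  rewrite Rmult_assoc. apply Rmult_le_compat_l; [generalize LV_pos; lra|].
  apply Rle_trans with (1 := HLz s t Hs Ht).
  apply Rmult_le_compat_r; [apply Rabs_pos|apply Rle_abs].
Qed.

Definition Vweighted (z : R -> V4) (s : R) := (1 + decay * s) * V (z s).

Lemma Vweighted_lipschitz z T : filippov_solution (Xcl p theta alpha betas) z -> 0 < T ->
  exists L, 0 <= L /\ forall s t, 0 <= s <= T -> 0 <= t <= T ->
    Rabs (Vweighted z s - Vweighted z t) <= L * Rabs (s - t).
Proof.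
  destruct constants_pos as (_ & _ & _ & _ & _ & _ & Hdec).
  intros Hsol HT. assert (Hz := proj1 Hsol).
  destruct (V_along_lipschitz z T Hsol HT) as [L1 [HL1 HV]].
  set (B := V (z 0) + L1 * T).
  assert (HB : forall t, 0 <= t <= T -> 0 <= V (z t) <= B).
  { intros t Ht. split; [apply V_nonneg, Hz; lra|].
    generalize (HV t 0 Ht ltac:(lra)) (Rle_abs (V (z t) - V (z 0))).
    rewrite Rminus_0_r, (Rabs_right t) by lra.
    assert (L1 * t <= L1 * T) by (apply Rmult_le_compat_l; lra). unfold B. lra. }
  exists ((1 + decay * T) * L1 + decay * B). split.
  { assert (0 <= B) by (generalize (HB 0 ltac:(lra)); lra).
    assert (0 <= 1 + decay * T) by nra.
    apply Rplus_le_le_0_compat; apply Rmult_le_pos; lra. }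
  intros s t Hs Ht. unfold Vweighted.
  replace ((1 + decay * s) * V (z s) - (1 + decay * t) * V (z t)) with
    ((1 + decay * s) * (V (z s) - V (z t)) + decay * (s - t) * V (z t)) by ring.
  apply Rle_trans with (1 := Rabs_triang _ _).
  rewrite !Rabs_mult, (Rabs_right (1 + decay * s)), (Rabs_right decay),
    (Rabs_right (V (z t))) by (try generalize (HB t Ht); nra).
  assert ((1 + decay * s) * Rabs (V (z s) - V (z t)) <= (1 + decay * T) * (L1 * Rabs (s - t)))
    by (apply Rmult_le_compat; [nra|apply Rabs_pos|nra|apply HV; assumption]).
  assert (decay * Rabs (s - t) * V (z t) <= decay * Rabs (s - t) * B)
    by (apply Rmult_le_compat_l; [generalize (Rabs_pos (s - t)); nra|generalize (HB t Ht); lra]).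
  lra.
Qed.

Lemma Vweighted_nonincreasing z b : filippov_solution (Xcl p theta alpha betas) z -> 0 <= b ->
  Vweighted z b <= Vweighted z 0.
Proof.
  destruct constants_pos as (_ & _ & _ & _ & _ & _ & Hdec).
  intros Hsol Hb. destruct (Req_dec b 0) as [->|Hb0]; [lra|].
  destruct (Vweighted_lipschitz z b Hsol ltac:(lra)) as [L [HL Hlip]].
  pose proof Hsol as (Hz & _ & Hnull).
  apply (lipschitz_nonincreasing (Vweighted z) 0 b L _ Hb HL Hlip Hnull).
  intros t Ht HN.
  assert (Hgood : exists d, has_deriv z t d /\ filippov_set (Xcl p theta alpha betas) (z t) d).
  { apply NNPP. intro Hc. apply HN. split; [lra|exact Hc]. }
  destruct Hgood as [d [Hd Hf]].
  destruct (V_decrease z t d Hz ltac:(lra) Hd Hf) as [D [HD HDle]].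
  assert (Hlin : derivable_pt_lim (fun s => 1 + decay * s) t decay).
  { assert (H := derivable_pt_lim_plus _ _ t _ _ (derivable_pt_lim_const 1 t)
      (derivable_pt_lim_scal (fun s => s) decay t 1 (derivable_pt_lim_id t))).
    rewrite Rplus_0_l, Rmult_1_r in H. exact H. }
  eexists. split; [exact (derivable_pt_lim_mult _ _ _ _ _ Hlin HD)|].
  assert (0 <= V (z t)) by (apply V_nonneg, Hz; lra).
  assert ((1 + decay * t) * D <= (1 + decay * t) * (- decay * V (z t)))
    by (apply Rmult_le_compat_l; nra).
  assert (0 <= decay * t * (decay * V (z t))) by (repeat apply Rmult_le_pos; lra).
  cbv beta. nra.
Qed.

Lemma V_decay_estimate z t : filippov_solution (Xcl p theta alpha betas) z -> 0 <= t ->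
  (1 + decay * t) * V (z t) <= V (z 0).
Proof.
  intros Hsol Ht. generalize (Vweighted_nonincreasing z t Hsol Ht). unfold Vweighted. lra.
Qed.

Lemma Lyapunov_stable : forall eps, 0 < eps -> exists delta, 0 < delta /\
  forall z, filippov_solution (Xcl p theta alpha betas) z -> Dp (z 0) -> vnorm (z 0) < delta ->
    forall t, 0 < t -> vnorm (z t) < eps.
Proof.
  destruct constants_pos as (_ & _ & _ & _ & _ & _ & Hdec).
  assert (HCV := CV_pos). assert (HCV' := CV'_pos).
  intros eps Heps. exists (eps / (CV * CV')). split; [apply Rdiv_lt_0_compat; nra|].
  intros z Hsol H0 Hn t Ht. assert (Hzt := proj1 Hsol t ltac:(lra)).
  assert (Hest := V_decay_estimate z t Hsol ltac:(lra)).
  assert (HVt := V_nonneg (z t) Hzt).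
  assert (V (z t) <= V (z 0)) by (assert (0 <= decay * t * V (z t)) by (repeat apply Rmult_le_pos; lra); nra).
  assert (Hup : CV * V (z 0) <= CV * (CV' * vnorm (z 0)))
    by (apply Rmult_le_compat_l; [lra|apply V_le_norm; assumption]).
  assert (Hlt : CV * CV' * vnorm (z 0) < CV * CV' * (eps / (CV * CV')))
    by (apply Rmult_lt_compat_l; nra).
  replace (CV * CV' * (eps / (CV * CV'))) with eps in Hlt by (field; lra).
  assert (CV * V (z t) <= CV * V (z 0)) by (apply Rmult_le_compat_l; lra).
  generalize (norm_le_V (z t) Hzt). nra.
Qed.

Lemma Lyapunov_attractive : forall z, filippov_solution (Xcl p theta alpha betas) z -> Dp (z 0) ->
  forall eps, 0 < eps -> exists T, forall t, T <= t -> vnorm (z t) < eps.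
Proof.
  destruct constants_pos as (_ & _ & _ & _ & _ & _ & Hdec). assert (HCV := CV_pos).
  intros z Hsol H0 eps Heps. assert (HV0 := V_nonneg (z 0) H0).
  exists (CV * V (z 0) / (decay * eps)). intros t Ht.
  assert (0 <= CV * V (z 0) / (decay * eps)) by (apply div_nonneg; nra).
  assert (Hzt := proj1 Hsol t ltac:(lra)).
  assert (Hest := V_decay_estimate z t Hsol ltac:(lra)).
  assert (HVt := V_nonneg (z t) Hzt). assert (HL := norm_le_V (z t) Hzt).
  assert (CV * V (z 0) <= decay * eps * t).
  { apply Rmult_le_reg_r with (/ (decay * eps)); [apply Rinv_0_lt_compat; nra|].
    replace (decay * eps * t * / (decay * eps)) with t by (field; lra). exact Ht. }
  assert (CV * ((1 + decay * t) * V (z t)) <= CV * V (z 0)) by (apply Rmult_le_compat_l; lra).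
  assert (Hfin : CV * V (z t) * (1 + decay * t) < eps * (1 + decay * t)) by nra.
  apply Rmult_lt_reg_r in Hfin; [lra|nra].
Qed.

End Model.

Theorem theorem4 (p : Params) (theta alpha betas : R) :
  params_ok p ->
  deltaM p <= deltas p ->
  0 < theta -> Rth p theta < 1 ->
  0 < alpha -> 0 < betas ->
  GAS_filippov (Xcl p theta alpha betas) Dp.
Proof.
  intros Hp Hds Htheta HR Halpha Hbetas. split.
  - exact (Lyapunov_stable p theta alpha betas Hp Hds Htheta HR Halpha Hbetas).
  - exact (Lyapunov_attractive p theta alpha betas Hp Hds Htheta HR Halpha Hbetas).
Qed.
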